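(* Let $\mathbf W=(w_{ij})$ be row-stochastic and compatible with the strongly connected digraph $\mathcal G$ with parameter $\bar m$, and let $(i^k,\mathbf d^k)$ satisfy the asynchrony model with constants $T,D$. Let $\widehat{\mathbf W}^k\in\mathbb R^{(D+2)I\times(D+2)I}$ be the augmented matrices defined in the context. Then for all $k\in\mathbb N_0$: (a) $\widehat{\mathbf W}^k$ is row-stochastic; (b) all entries in the first $I$ columns of $\widehat{\mathbf W}^{k+K_1-1:k}$ are at least $\eta=\bar m^{K_1}$; (c) there exist a constant $C_2>0$ and a sequence of stochastic vectors $\{\boldsymbol\psi^k\}_{k\in\mathbb N_0}\subset\mathbb R^{(D+2)I}$ such that $\|\widehat{\mathbf W}^{k:t}-\mathbf 1\boldsymbol\psi^{t\top}\|\le C_2\rho^{k-t}$ for all $k\ge t\ge0$, with $\rho=(1-\bar m^{K_1})^{1/K_1}$, and $\psi_i^k\ge\eta$ for all $k$ and $i\in\{1,\dots,I\}$.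
   Context: $\mathcal G=(\mathcal V,\mathcal E)$, $\mathcal V=\{1,\dots,I\}$, strongly connected digraph without self-loops, $\mathcal N_i^{\rm in}=\{j:(j,i)\in\mathcal E\}$. Compatibility with parameter $\bar m\in(0,1)$: $w_{ii}\ge\bar m$, $w_{ij}\ge\bar m$ for $(j,i)\in\mathcal E$, $w_{ij}=0$ otherwise. Asynchrony model: $(i^k,\mathbf d^k)$, $i^k\in\mathcal V$, $\mathbf d^k=(d_j^k)_{j\in\mathcal N^{\rm in}_{i^k}}$, every agent appears among $i^k,\dots,i^{k+T-1}$ for all $k$, and $0\le d_j^k\le D$. $K_1=(2I-1)T+ID$. Augmented matrix $\widehat{\mathbf W}^k$ (rows/columns indexed $1,\dots,(D+2)I$): entry $(r,m)$ equals $w_{i^ki^k}$ if $r=m=i^k$; $w_{i^kj}$ if $r=i^k$ and $m=j+(d_j^k+1)I$ for $j\in\mathcal N^{\rm in}_{i^k}$; $1$ if $r=m\in\{1,\dots,2I\}\setminus\{i^k,i^k+I\}$; $1$ if $r\in\{2I+1,\dots,(D+2)I\}\cup\{i^k+I\}$ and $m=r-I$; $0$ otherwise. (This describes the update of the stacked vector $[\mathbf x^{k\top},\mathbf v^{k\top},\mathbf v^{k-1\top},\dots,\mathbf v^{k-D\top}]^\top$.) Products: $\widehat{\mathbf W}^{k:t}=\widehat{\mathbf W}^k\widehat{\mathbf W}^{k-1}\cdots\widehat{\mathbf W}^t$ for $k>t$, $=\widehat{\mathbf W}^t$ for $k=t$. $\|\cdot\|$ is the spectral norm. *)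

(* classical reals.  Agents are 0-indexed: V = {0,...,I-1}.
   Matrices/vectors are functions nat -> nat -> R / nat -> R, only the
   entries with indices below the relevant dimension are meaningful. *)
From Stdlib Require Import Reals Lra Lia Arith Relations.
Open Scope R_scope.

Fixpoint rsum (n : nat) (f : nat -> R) : R :=
  match n with
  | O => 0
  | S n' => rsum n' f + f n'
  end.

Definition row_stochastic (n : nat) (A : nat -> nat -> R) : Prop :=
  forall r, (r < n)%nat ->
    (forall m, (m < n)%nat -> 0 <= A r m) /\ rsum n (fun m => A r m) = 1.

Definition stochastic_vec (n : nat) (v : nat -> R) : Prop :=
  (forall m, (m < n)%nat -> 0 <= v m) /\ rsum n v = 1.

Definition matmul (n : nat) (A B : nat -> nat -> R) : nat -> nat -> R :=
  fun r m => rsum n (fun l => A r l * B l m).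

Definition matvec (n : nat) (A : nat -> nat -> R) (x : nat -> R) : nat -> R :=
  fun r => rsum n (fun m => A r m * x m).

Definition norm2 (n : nat) (x : nat -> R) : R :=
  sqrt (rsum n (fun i => x i ^ 2)).

(* ||A|| <= c for the spectral norm (operator norm induced by the
   Euclidean norm): ||A|| = sup_{x<>0} ||Ax||_2/||x||_2, so ||A|| <= c
   iff ||Ax||_2 <= c ||x||_2 for all x. *)
Definition spec_norm_le (n : nat) (A : nat -> nat -> R) (c : R) : Prop :=
  forall x : nat -> R, norm2 n (matvec n A x) <= c * norm2 n x.

(* Digraph on V = {0..I-1}: E j i = true means (j,i) is an edge j -> i. *)
Definition edge_rel (I : nat) (E : nat -> nat -> bool) : relation nat :=
  fun a b => (a < I)%nat /\ (b < I)%nat /\ E a b = true.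

Definition strongly_connected_digraph (I : nat) (E : nat -> nat -> bool) : Prop :=
  (forall i j, E i j = true -> (i < I)%nat /\ (j < I)%nat) /\
  (forall i, E i i = false) /\
  (forall i j, (i < I)%nat -> (j < I)%nat -> i <> j ->
     clos_trans nat (edge_rel I E) i j).

Definition compatible (I : nat) (E : nat -> nat -> bool) (W : nat -> nat -> R)
    (mbar : R) : Prop :=
  forall i j, (i < I)%nat -> (j < I)%nat ->
    (i = j -> mbar <= W i i) /\
    (E j i = true -> mbar <= W i j) /\
    (i <> j -> E j i = false -> W i j = 0).

(* asynchrony model: ik k is the active agent at iteration k, d k j the
   delay d_j^k of the information from in-neighbour j *)
Definition async_model (I : nat) (E : nat -> nat -> bool) (T D : nat)
    (ik : nat -> nat) (d : nat -> nat -> nat) : Prop :=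
  (forall k, (ik k < I)%nat) /\
  (forall k i, (i < I)%nat -> exists s, (k <= s)%nat /\ (s < k + T)%nat /\ ik s = i) /\
  (forall k j, E j (ik k) = true -> (d k j <= D)%nat).

(* The augmented matrix \hat W^k (0-indexed version of the paper's
   definition; rows/columns 0..(D+2)I-1). *)
Definition What (I D : nat) (E : nat -> nat -> bool) (W : nat -> nat -> R)
    (ik : nat -> nat) (d : nat -> nat -> nat) (k : nat) : nat -> nat -> R :=
  fun r m =>
    let i := ik k in
    if Nat.eqb r i then
      (if Nat.eqb m i then W i i else 0)
      + rsum I (fun j => if andb (E j i) (Nat.eqb m (j + (d k j + 1) * I))
                         then W i j else 0)
    else if andb (Nat.ltb r (2 * I)) (negb (Nat.eqb r (i + I))) then
      (if Nat.eqb m r then 1 else 0)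
    else if andb (orb (andb (Nat.leb (2 * I) r) (Nat.ltb r ((D + 2) * I)))
                      (Nat.eqb r (i + I)))
                 (Nat.eqb m (r - I)) then 1
    else 0.

(* WhatProd t n = \hat W^{t+n:t} = \hat W^{t+n} ... \hat W^{t} *)
Fixpoint WhatProd (I D : nat) (E : nat -> nat -> bool) (W : nat -> nat -> R)
    (ik : nat -> nat) (d : nat -> nat -> nat) (t n : nat) : nat -> nat -> R :=
  match n with
  | O => What I D E W ik d t
  | S n' => matmul ((D + 2) * I) (What I D E W ik d (t + S n'))
                   (WhatProd I D E W ik d t n')
  end.

(* Part (a) is bookkeeping: the active row of [What k] carries row [ik k] of
   [W], the neighbours' weights moved to their delayed copies, and every other
   row is a 0/1 shift.  For (b), follow entries >= mbar through the product:
   an agent keeps weight >= mbar on its own state, within T steps it is copied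
   into v, the copy ages through the delay buffer and is read by an
   out-neighbour at its next activation.  By strong connectivity, I - 1 such
   hops of 2T + D steps reach every agent and T + D more steps every buffer
   slot, K1 steps in all.  For (c), a lower bound eta on one column of every
   window of K1 factors shrinks the oscillation of each column of the product
   by 1 - eta per window, so the columns converge geometrically to a limit psi,
   which inherits the lower bound eta. *)

From Stdlib Require Import Reals Lra Lia Arith Relations List Classical.
Open Scope R_scope.

Lemma rsum_ext n f g : (forall i, (i < n)%nat -> f i = g i) -> rsum n f = rsum n g.
Proof.
  induction n as [|n IH]; intros H; simpl; [reflexivity|].
  rewrite IH by (intros; apply H; lia). rewrite H by lia. reflexivity.
Qed.

Lemma rsum_plus n f g : rsum n (fun i => f i + g i) = rsum n f + rsum n g.
Proof. induction n as [|n IH]; simpl; [lra|]. rewrite IH. lra. Qed.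

Lemma rsum_minus n f g : rsum n (fun i => f i - g i) = rsum n f - rsum n g.
Proof. induction n as [|n IH]; simpl; [lra|]. rewrite IH. lra. Qed.

Lemma rsum_scal_l n c f : rsum n (fun i => c * f i) = c * rsum n f.
Proof. induction n as [|n IH]; simpl; [lra|]. rewrite IH. lra. Qed.

Lemma rsum_scal_r n c f : rsum n (fun i => f i * c) = rsum n f * c.
Proof. induction n as [|n IH]; simpl; [lra|]. rewrite IH. lra. Qed.

Lemma rsum_const n c : rsum n (fun _ => c) = INR n * c.
Proof. induction n as [|n IH]; simpl rsum; [simpl; lra|]. rewrite IH, S_INR. lra. Qed.

Lemma rsum_le n f g : (forall i, (i < n)%nat -> f i <= g i) -> rsum n f <= rsum n g.
Proof.
  induction n as [|n IH]; intros H; simpl; [lra|].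
  assert (f n <= g n) by (apply H; lia).
  assert (rsum n f <= rsum n g) by (apply IH; intros; apply H; lia).
  lra.
Qed.

Lemma rsum_nonneg n f : (forall i, (i < n)%nat -> 0 <= f i) -> 0 <= rsum n f.
Proof.
  intros H. apply Rle_trans with (rsum n (fun _ => 0)).
  - rewrite rsum_const. lra.
  - apply rsum_le; auto.
Qed.

Lemma rsum_term_le n f l :
  (forall i, (i < n)%nat -> 0 <= f i) -> (l < n)%nat -> f l <= rsum n f.
Proof.
  induction n as [|n IH]; intros H Hl; simpl; [lia|].
  destruct (Nat.eq_dec l n) as [->|Hne].
  - assert (0 <= rsum n f) by (apply rsum_nonneg; intros; apply H; lia). lra.
  - assert (f l <= rsum n f) by (apply IH; [intros; apply H|]; lia).
    assert (0 <= f n) by (apply H; lia). lra.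
Qed.

Lemma rsum_swap n p F :
  rsum n (fun i => rsum p (fun j => F i j)) = rsum p (fun j => rsum n (fun i => F i j)).
Proof.
  induction n as [|n IH]; simpl.
  - rewrite rsum_const. lra.
  - rewrite IH, <- rsum_plus. reflexivity.
Qed.

Lemma rsum_indicator n c a :
  rsum n (fun m => if Nat.eqb m c then a else 0) = if Nat.ltb c n then a else 0.
Proof.
  induction n as [|n IH]; simpl.
  - destruct (Nat.ltb_spec c 0); [lia|lra].
  - rewrite IH.
    destruct (Nat.ltb_spec c n), (Nat.ltb_spec c (S n)), (Nat.eqb_spec n c);
      subst; try lia; lra.
Qed.

Lemma rsum_abs n f : Rabs (rsum n f) <= rsum n (fun i => Rabs (f i)).
Proof.
  induction n as [|n IH]; simpl.
  - rewrite Rabs_R0. lra.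
  - eapply Rle_trans; [apply Rabs_triang|]. lra.
Qed.

(* [rmax 0 f] is the junk value [f 0]; all lemmas about it assume [1 <= n]. *)
Fixpoint rmax (n : nat) (f : nat -> R) : R :=
  match n with
  | O => f O
  | S n' => Rmax (rmax n' f) (f n')
  end.

Definition rmin (n : nat) (f : nat -> R) : R := - rmax n (fun l => - f l).

Lemma rmax_ge n f l : (l < n)%nat -> f l <= rmax n f.
Proof.
  induction n as [|n IH]; intros Hl; simpl; [lia|].
  destruct (Nat.eq_dec l n) as [->|Hne]; [apply Rmax_r|].
  eapply Rle_trans; [apply IH; lia|apply Rmax_l].
Qed.

Lemma rmax_lub n f c :
  (1 <= n)%nat -> (forall l, (l < n)%nat -> f l <= c) -> rmax n f <= c.
Proof.
  induction n as [|[|n] IH]; intros Hn H; [lia| |]; simpl.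
  - apply Rmax_lub; apply H; lia.
  - apply Rmax_lub; [apply IH; [lia|intros; apply H; lia]|apply H; lia].
Qed.

Lemma rmin_le n f l : (l < n)%nat -> rmin n f <= f l.
Proof.
  intros Hl. unfold rmin.
  pose proof (rmax_ge n (fun l => - f l) l Hl). simpl in *. lra.
Qed.

Lemma rmin_glb n f c :
  (1 <= n)%nat -> (forall l, (l < n)%nat -> c <= f l) -> c <= rmin n f.
Proof.
  intros Hn H. unfold rmin.
  assert (rmax n (fun l => - f l) <= - c).
  { apply rmax_lub; auto. intros l Hl. specialize (H l Hl). lra. }
  lra.
Qed.

Lemma Rle_pow_le1 x m n : 0 <= x <= 1 -> (m <= n)%nat -> x ^ n <= x ^ m.
Proof.
  intros Hx Hmn. replace n with (m + (n - m))%nat by lia. rewrite pow_add.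
  assert (x ^ (n - m) <= 1) by (rewrite <- (pow1 (n - m)); apply pow_incr; lra).
  pose proof (pow_le x m (proj1 Hx)). nra.
Qed.

Lemma Rabs_le_geometric_eq0 x c a :
  0 <= c -> 0 <= a < 1 -> (forall q, Rabs x <= c * a ^ q) -> x = 0.
Proof.
  intros Hc Ha H. destruct (Req_dec x 0) as [|Hx]; auto. exfalso.
  apply Rabs_pos_lt in Hx.
  destruct (Req_dec c 0) as [->|Hc0]; [specialize (H O); lra|].
  destruct (pow_lt_1_zero a) with (y := Rabs x / c) as [q Hq].
  { rewrite Rabs_right; lra. }
  { apply Rdiv_lt_0_compat; lra. }
  specialize (Hq q (le_n q)). specialize (H q).
  rewrite Rabs_right in Hq by (apply Rle_ge, pow_le; lra).
  apply Rmult_lt_compat_l with (r := c) in Hq; [|lra].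
  replace (c * (Rabs x / c)) with (Rabs x) in Hq by (field; lra).
  lra.
Qed.

Lemma convex_comb_le_gap N (a p : nat -> R) hi eta :
  (0 < N)%nat -> (forall l, (l < N)%nat -> 0 <= a l) -> rsum N a = 1 ->
  (forall l, (l < N)%nat -> p l <= hi) -> eta <= a O ->
  rsum N (fun l => a l * p l) <= hi - eta * (hi - p O).
Proof.
  intros HN Ha Hs Hp He.
  replace (rsum N (fun l => a l * p l))
    with (rsum N (fun l => a l * hi) - rsum N (fun l => a l * (hi - p l)))
    by (rewrite <- rsum_minus; apply rsum_ext; intros; ring).
  rewrite rsum_scal_r, Hs.
  assert (a O * (hi - p O) <= rsum N (fun l => a l * (hi - p l))).
  { apply (rsum_term_le N (fun l => a l * (hi - p l))); auto.
    intros i Hi. apply Rmult_le_pos; auto. specialize (Hp i Hi). lra. }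
  assert (eta * (hi - p O) <= a O * (hi - p O)).
  { apply Rmult_le_compat_r; auto. specialize (Hp O HN). lra. }
  lra.
Qed.

Lemma convex_comb_ge_gap N (a p : nat -> R) lo eta :
  (0 < N)%nat -> (forall l, (l < N)%nat -> 0 <= a l) -> rsum N a = 1 ->
  (forall l, (l < N)%nat -> lo <= p l) -> eta <= a O ->
  lo + eta * (p O - lo) <= rsum N (fun l => a l * p l).
Proof.
  intros HN Ha Hs Hp He.
  replace (rsum N (fun l => a l * p l))
    with (rsum N (fun l => a l * lo) + rsum N (fun l => a l * (p l - lo)))
    by (rewrite <- rsum_plus; apply rsum_ext; intros; ring).
  rewrite rsum_scal_r, Hs.
  assert (a O * (p O - lo) <= rsum N (fun l => a l * (p l - lo))).
  { apply (rsum_term_le N (fun l => a l * (p l - lo))); auto.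
    intros i Hi. apply Rmult_le_pos; auto. specialize (Hp i Hi). lra. }
  assert (eta * (p O - lo) <= a O * (p O - lo)).
  { apply Rmult_le_compat_r; auto. specialize (Hp O HN). lra. }
  lra.
Qed.

Lemma convex_comb_le N (a p : nat -> R) hi :
  (0 < N)%nat -> (forall l, (l < N)%nat -> 0 <= a l) -> rsum N a = 1 ->
  (forall l, (l < N)%nat -> p l <= hi) -> rsum N (fun l => a l * p l) <= hi.
Proof.
  intros HN Ha Hs Hp.
  pose proof (convex_comb_le_gap N a p hi 0 HN Ha Hs Hp (Ha O HN)). lra.
Qed.

Lemma convex_comb_ge N (a p : nat -> R) lo :
  (0 < N)%nat -> (forall l, (l < N)%nat -> 0 <= a l) -> rsum N a = 1 ->
  (forall l, (l < N)%nat -> lo <= p l) -> lo <= rsum N (fun l => a l * p l).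
Proof.
  intros HN Ha Hs Hp.
  pose proof (convex_comb_ge_gap N a p lo 0 HN Ha Hs Hp (Ha O HN)). lra.
Qed.

Fixpoint mprod (N : nat) (A : nat -> nat -> nat -> R) (t n : nat) : nat -> nat -> R :=
  match n with
  | O => A t
  | S n' => matmul N (A (t + S n')%nat) (mprod N A t n')
  end.

Lemma matmul_assoc N A B C r m :
  matmul N A (matmul N B C) r m = matmul N (matmul N A B) C r m.
Proof.
  unfold matmul.
  transitivity (rsum N (fun l => rsum N (fun p => A r l * B l p * C p m))).
  - apply rsum_ext; intros. rewrite <- rsum_scal_l. apply rsum_ext; intros; ring.
  - rewrite rsum_swap. apply rsum_ext; intros. rewrite <- rsum_scal_r. reflexivity.
Qed.

Lemma mprod_split N A t n k r m :
  mprod N A t (n + S k) r m = matmul N (mprod N A (t + n + 1) k) (mprod N A t n) r m.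
Proof.
  revert r m. induction k as [|k IH]; intros r m.
  - rewrite Nat.add_1_r. simpl. rewrite Nat.add_1_r, Nat.add_succ_r. reflexivity.
  - rewrite Nat.add_succ_r. simpl mprod at 1. unfold matmul at 1.
    rewrite (rsum_ext _ _ (fun l => A (t + S (n + S k))%nat r l *
               matmul N (mprod N A (t + n + 1) k) (mprod N A t n) l m))
      by (intros; rewrite IH; reflexivity).
    fold (matmul N (A (t + S (n + S k))%nat)
            (matmul N (mprod N A (t + n + 1) k) (mprod N A t n)) r m).
    rewrite matmul_assoc. simpl mprod.
    replace (t + n + 1 + S k)%nat with (t + S (n + S k))%nat by lia.
    reflexivity.
Qed.

Section StochasticProducts.

Variables (N : nat) (A : nat -> nat -> nat -> R).
Hypothesis A_stochastic : forall t, row_stochastic N (A t).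

Lemma mprod_nonneg t n r m : (r < N)%nat -> (m < N)%nat -> 0 <= mprod N A t n r m.
Proof.
  revert r m. induction n as [|n IH]; intros r m Hr Hm; simpl.
  - apply (A_stochastic t r Hr); auto.
  - apply rsum_nonneg. intros l Hl.
    apply Rmult_le_pos; [apply (A_stochastic _ r Hr)|]; auto.
Qed.

Lemma mprod_row_sum t n r : (r < N)%nat -> rsum N (fun m => mprod N A t n r m) = 1.
Proof.
  revert r. induction n as [|n IH]; intros r Hr; simpl.
  - apply (A_stochastic t r Hr).
  - unfold matmul. rewrite rsum_swap.
    rewrite (rsum_ext _ _ (fun l => A (t + S n)%nat r l * 1))
      by (intros; rewrite rsum_scal_l, IH; auto).
    rewrite rsum_scal_r, Rmult_1_r. apply (A_stochastic _ r Hr).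
Qed.

Lemma mprod_le1 t n r m : (r < N)%nat -> (m < N)%nat -> mprod N A t n r m <= 1.
Proof.
  intros Hr Hm. rewrite <- (mprod_row_sum t n r Hr).
  apply (rsum_term_le N (fun m => mprod N A t n r m)); auto.
  intros; apply mprod_nonneg; auto.
Qed.

Hypothesis N_pos : (1 <= N)%nat.

Definition col_max t n m := rmax N (fun r => mprod N A t n r m).
Definition col_min t n m := rmin N (fun r => mprod N A t n r m).

Lemma col_max_ge t n r m : (r < N)%nat -> mprod N A t n r m <= col_max t n m.
Proof. intros; apply (rmax_ge _ (fun r => mprod N A t n r m)); auto. Qed.

Lemma col_min_le t n r m : (r < N)%nat -> col_min t n m <= mprod N A t n r m.
Proof. intros; apply (rmin_le _ (fun r => mprod N A t n r m)); auto. Qed.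

Lemma col_max_le1 t n m : (m < N)%nat -> col_max t n m <= 1.
Proof. intros. apply rmax_lub; auto. intros; apply mprod_le1; auto. Qed.

Lemma col_min_nonneg t n m : (m < N)%nat -> 0 <= col_min t n m.
Proof. intros. apply rmin_glb; auto. intros; apply mprod_nonneg; auto. Qed.

Lemma col_min_le_max t n m : col_min t n m <= col_max t n m.
Proof.
  apply Rle_trans with (mprod N A t n O m); [apply col_min_le|apply col_max_ge]; lia.
Qed.

(* Each new factor replaces the rows by convex combinations of the old rows. *)
Lemma col_max_decr t n n' m : (n <= n')%nat -> col_max t n' m <= col_max t n m.
Proof.
  induction 1 as [|n' _ IH]; [lra|].
  eapply Rle_trans; [|exact IH].
  apply rmax_lub; auto. intros r Hr.
  apply convex_comb_le; [lia|apply (A_stochastic _ r Hr)|apply (A_stochastic _ r Hr)|].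
  intros; apply col_max_ge; auto.
Qed.

Lemma col_min_incr t n n' m : (n <= n')%nat -> col_min t n m <= col_min t n' m.
Proof.
  induction 1 as [|n' _ IH]; [lra|].
  eapply Rle_trans; [exact IH|].
  apply rmin_glb; auto. intros r Hr.
  apply convex_comb_ge; [lia|apply (A_stochastic _ r Hr)|apply (A_stochastic _ r Hr)|].
  intros; apply col_min_le; auto.
Qed.

Variables (k : nat) (eta : R).
Hypothesis eta_range : 0 < eta < 1.
Hypothesis window_col0_ge : forall t r, (r < N)%nat -> eta <= mprod N A t k r O.

Lemma col_osc_contract t n m :
  col_max t (n + S k) m - col_min t (n + S k) m <= (1 - eta) * (col_max t n m - col_min t n m).
Proof.
  set (p0 := mprod N A t n O m).
  assert (col_max t (n + S k) m <= col_max t n m - eta * (col_max t n m - p0)).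
  { apply rmax_lub; auto. intros r Hr. rewrite mprod_split.
    apply convex_comb_le_gap; auto; [intros; apply mprod_nonneg; auto
      |apply mprod_row_sum; auto|intros; apply col_max_ge; auto]. }
  assert (col_min t n m + eta * (p0 - col_min t n m) <= col_min t (n + S k) m).
  { apply rmin_glb; auto. intros r Hr. rewrite mprod_split.
    apply (convex_comb_ge_gap N _ (fun l => mprod N A t n l m)); auto;
      [intros; apply mprod_nonneg; auto|apply mprod_row_sum; auto|intros; apply col_min_le; auto]. }
  lra.
Qed.

Lemma col_osc_geometric t q s m : (m < N)%nat ->
  col_max t (q * S k + s) m - col_min t (q * S k + s) m <= (1 - eta) ^ q.
Proof.
  intros Hm. induction q as [|q IH].
  - pose proof (col_max_le1 t s m Hm). pose proof (col_min_nonneg t s m Hm). simpl. lra.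
  - replace (S q * S k + s)%nat with ((q * S k + s) + S k)%nat by lia.
    eapply Rle_trans; [apply col_osc_contract|]. simpl pow. apply Rmult_le_compat_l; lra.
Qed.

Lemma mprod_limit_exists :
  exists psi : nat -> nat -> R,
    (forall t, stochastic_vec N (psi t)) /\
    (forall t n r m, (r < N)%nat -> (m < N)%nat ->
       Rabs (mprod N A t n r m - psi t m) <= (1 - eta) ^ (n / S k)) /\
    (forall t n m, col_min t n m <= psi t m).
Proof.
  assert (Hlub : forall t m, {l | is_lub (fun x => exists n, x = col_min t n m) l}).
  { intros t m. apply completeness.
    - exists (col_max t O m). intros x [n ->].
      pose proof (col_min_le_max t n m). pose proof (col_max_decr t O n m (Nat.le_0_l n)). lra.
    - exists (col_min t O m), O. reflexivity. }
  set (psi t m := proj1_sig (Hlub t m)).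
  assert (Hge : forall t n m, col_min t n m <= psi t m).
  { intros t n m. unfold psi. destruct (Hlub t m) as [l [Hu Hb]]. apply Hu. exists n; auto. }
  assert (Hle : forall t n m, psi t m <= col_max t n m).
  { intros t n m. unfold psi. destruct (Hlub t m) as [l [Hu Hb]]. apply Hb. intros x [n' ->].
    pose proof (col_min_incr t n' (Nat.max n n') m (Nat.le_max_r _ _)).
    pose proof (col_min_le_max t (Nat.max n n') m).
    pose proof (col_max_decr t n (Nat.max n n') m (Nat.le_max_l _ _)). lra. }
  assert (Hclose : forall t n r m, (r < N)%nat -> (m < N)%nat ->
            Rabs (mprod N A t n r m - psi t m) <= (1 - eta) ^ (n / S k)).
  { intros t n r m Hr Hm.
    rewrite (Nat.div_mod_eq n (S k)), Nat.mul_comm at 1.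
    pose proof (col_osc_geometric t (n / S k) (n mod S k) m Hm).
    pose proof (Hge t (n / S k * S k + n mod S k)%nat m).
    pose proof (Hle t (n / S k * S k + n mod S k)%nat m).
    pose proof (col_max_ge t (n / S k * S k + n mod S k)%nat r m Hr).
    pose proof (col_min_le t (n / S k * S k + n mod S k)%nat r m Hr).
    apply Rabs_le. lra. }
  exists psi. split; [|split]; auto.
  intros t. split.
  - intros m Hm. pose proof (Hge t O m). pose proof (col_min_nonneg t O m Hm). lra.
  - (* the row sums of [psi t] and of [mprod t (q * S k)] differ by at most N (1 - eta)^q *)
    apply Rminus_diag_uniq, (Rabs_le_geometric_eq0 _ (INR N) (1 - eta)); [apply pos_INR|lra|].
    intros q. rewrite <- (mprod_row_sum t (q * S k) O) at 1 by lia. rewrite <- rsum_minus.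
    eapply Rle_trans; [apply rsum_abs|]. rewrite <- rsum_const. apply rsum_le. intros m Hm.
    rewrite Rabs_minus_sym. specialize (Hclose t (q * S k)%nat O m ltac:(lia) Hm).
    rewrite Nat.div_mul in Hclose by lia. exact Hclose.
Qed.

End StochasticProducts.

Lemma spec_norm_le_entrywise N (B : nat -> nat -> R) e :
  (1 <= N)%nat -> 0 <= e ->
  (forall r m, (r < N)%nat -> (m < N)%nat -> Rabs (B r m) <= e) ->
  spec_norm_le N B (INR N * INR N * e).
Proof.
  intros HN He HB x. unfold norm2, matvec.
  set (X := sqrt (rsum N (fun i => x i ^ 2))).
  assert (HX : 0 <= X) by apply sqrt_pos.
  assert (HNr : 1 <= INR N) by (apply (le_INR 1); auto).
  assert (Hx : forall m, (m < N)%nat -> Rabs (x m) <= X).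
  { intros m Hm. rewrite <- (sqrt_pow2 (Rabs (x m))) by apply Rabs_pos. rewrite pow2_abs.
    apply sqrt_le_1_alt, (rsum_term_le N (fun i => x i ^ 2)); auto.
    intros; apply pow2_ge_0. }
  assert (Hrow : forall r, (r < N)%nat ->
            Rabs (rsum N (fun m => B r m * x m)) <= INR N * e * X).
  { intros r Hr. eapply Rle_trans; [apply rsum_abs|].
    rewrite Rmult_assoc, <- rsum_const. apply rsum_le. intros m Hm.
    rewrite Rabs_mult. apply Rmult_le_compat; auto using Rabs_pos. }
  assert (Hsq : rsum N (fun r => rsum N (fun m => B r m * x m) ^ 2)
                <= INR N * (INR N * e * X) ^ 2).
  { rewrite <- rsum_const. apply rsum_le. intros r Hr. rewrite <- pow2_abs.
    apply pow_incr. split; [apply Rabs_pos|auto]. }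
  rewrite <- (sqrt_pow2 (INR N * INR N * e * X)) by (repeat apply Rmult_le_pos; lra).
  apply sqrt_le_1_alt. eapply Rle_trans; [exact Hsq|].
  assert (0 <= (INR N * e * X) ^ 2) by apply pow2_ge_0.
  replace ((INR N * INR N * e * X) ^ 2) with (INR N * INR N * (INR N * e * X) ^ 2) by ring.
  nra.
Qed.

Lemma spec_norm_le_mono N B c c' : c <= c' -> spec_norm_le N B c -> spec_norm_le N B c'.
Proof.
  intros Hc H x. eapply Rle_trans; [apply H|].
  apply Rmult_le_compat_r; [apply sqrt_pos|exact Hc].
Qed.

Lemma spec_norm_le_ext N B B' c :
  (forall r m, (r < N)%nat -> (m < N)%nat -> B r m = B' r m) ->
  spec_norm_le N B c -> spec_norm_le N B' c.
Proof.
  intros HB H x. unfold norm2, matvec.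
  rewrite (rsum_ext N (fun i => rsum N (fun m => B' i m * x m) ^ 2)
                     (fun i => rsum N (fun m => B i m * x m) ^ 2)).
  - apply H.
  - intros i Hi. f_equal. apply rsum_ext. intros m Hm. now rewrite HB.
Qed.

(* With [rho ^ K = a], the bound [a ^ (n / K)] loses at most one factor [a]
   against [rho ^ n], because [n < (n / K + 1) K]. *)
Lemma pow_div_le_root_pow a K n : 0 < a < 1 -> (1 <= K)%nat ->
  a ^ (n / K) <= Rpower a (1 / INR K) ^ n / a.
Proof.
  intros Ha HK. set (rho := Rpower a (1 / INR K)).
  assert (HK' : INR K <> 0) by (apply not_0_INR; lia).
  assert (HrK : rho ^ K = a).
  { rewrite <- Rpower_pow by (apply exp_pos). unfold rho. rewrite Rpower_mult.
    replace (1 / INR K * INR K) with 1 by (field; auto). apply Rpower_1. lra. }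
  assert (Hr1 : 0 <= rho <= 1).
  { split; [left; apply exp_pos|].
    destruct (Rle_lt_dec rho 1) as [|Hgt]; auto.
    pose proof (Rlt_pow_R1 rho K Hgt ltac:(lia)). lra. }
  apply Rmult_le_reg_r with a; [lra|].
  unfold Rdiv. rewrite Rmult_assoc, Rinv_l, Rmult_1_r by lra.
  rewrite <- HrK at 1 2. rewrite <- pow_mult, <- pow_add.
  apply Rle_pow_le1; auto.
  pose proof (Nat.div_mod_eq n K). pose proof (Nat.mod_upper_bound n K ltac:(lia)). nia.
Qed.

Theorem mprod_converges_geometrically N A K eta :
  (forall t, row_stochastic N (A t)) -> (1 <= N)%nat -> (1 <= K)%nat -> 0 < eta < 1 ->
  (forall t r, (r < N)%nat -> eta <= mprod N A t (K - 1) r O) ->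
  exists psi : nat -> nat -> R,
    (forall t, stochastic_vec N (psi t)) /\
    (forall t n, spec_norm_le N (fun r m => mprod N A t n r m - psi t m)
                   (INR N * INR N / (1 - eta) * Rpower (1 - eta) (1 / INR K) ^ n)) /\
    (forall t n m c, (forall r, (r < N)%nat -> c <= mprod N A t n r m) -> c <= psi t m).
Proof.
  intros HA HN HK Heta Hcol.
  replace K with (S (K - 1)) by lia.
  destruct (mprod_limit_exists N A HA HN (K - 1) eta Heta Hcol) as [psi [Hstoch [Hclose Hmin]]].
  exists psi. split; [exact Hstoch|split].
  - intros t n.
    assert (He : 0 <= (1 - eta) ^ (n / S (K - 1))) by (apply pow_le; lra).
    eapply spec_norm_le_mono; [|apply (spec_norm_le_entrywise N _ _ HN He); auto].
    pose proof (pow_div_le_root_pow (1 - eta) (S (K - 1)) n ltac:(lra) ltac:(lia)).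
    assert (0 <= INR N * INR N) by (apply Rmult_le_pos; apply pos_INR).
    replace (INR N * INR N / (1 - eta) * Rpower (1 - eta) (1 / INR (S (K - 1))) ^ n)
      with (INR N * INR N * (Rpower (1 - eta) (1 / INR (S (K - 1))) ^ n / (1 - eta)))
      by (field; lra).
    apply Rmult_le_compat_l; auto.
  - intros t n m c Hc. eapply Rle_trans; [apply rmin_glb; [exact HN|exact Hc]|apply Hmin].
Qed.

Lemma async_period_pos I E T D ik d :
  (1 <= I)%nat -> async_model I E T D ik d -> (1 <= T)%nat.
Proof.
  intros HI [_ [Hactive _]]. destruct (Hactive O O ltac:(lia)) as [s [? [? ?]]]. lia.
Qed.

Section AugmentedMatrix.

Variables (I : nat) (E : nat -> nat -> bool) (W : nat -> nat -> R) (mbar : R)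
  (T D : nat) (ik : nat -> nat) (d : nat -> nat -> nat).
Hypotheses (I_pos : (1 <= I)%nat) (E_strong : strongly_connected_digraph I E)
  (W_stochastic : row_stochastic I W) (mbar_range : 0 < mbar < 1)
  (W_compatible : compatible I E W mbar) (asynchrony : async_model I E T D ik d).

Local Notation Wh := (What I D E W ik d).

Lemma ik_lt k : (ik k < I)%nat.
Proof. apply asynchrony. Qed.

Lemma W_nonneg i j : (i < I)%nat -> (j < I)%nat -> 0 <= W i j.
Proof. intros; apply W_stochastic; auto. Qed.

Lemma What_active_row k m :
  Wh k (ik k) m = (if Nat.eqb m (ik k) then W (ik k) (ik k) else 0)
    + rsum I (fun j => if andb (E j (ik k)) (Nat.eqb m (j + (d k j + 1) * I))
                       then W (ik k) j else 0).
Proof. unfold What. rewrite Nat.eqb_refl. reflexivity. Qed.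

Lemma What_idle_row k r m : r <> ik k ->
  Wh k r m =
    if andb (Nat.ltb r (2 * I)) (negb (Nat.eqb r (ik k + I))) then
      (if Nat.eqb m r then 1 else 0)
    else if andb (orb (andb (Nat.leb (2 * I) r) (Nat.ltb r ((D + 2) * I)))
                      (Nat.eqb r (ik k + I)))
                 (Nat.eqb m (r - I)) then 1
    else 0.
Proof. intros H. unfold What. destruct (Nat.eqb_spec r (ik k)); [contradiction|reflexivity]. Qed.

Lemma What_nonneg k r m : 0 <= Wh k r m.
Proof.
  pose proof (ik_lt k). destruct (Nat.eq_dec r (ik k)) as [->|Hne].
  - rewrite What_active_row. apply Rplus_le_le_0_compat.
    + destruct (Nat.eqb m (ik k)); [apply W_nonneg; auto|lra].
    + apply rsum_nonneg. intros j Hj. destruct andb; [apply W_nonneg; auto|lra].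
  - rewrite What_idle_row by auto.
    repeat match goal with |- context [if ?b then _ else _] => destruct b end; lra.
Qed.

Lemma W_diag_plus_in_edges i j : (i < I)%nat -> (j < I)%nat ->
  W i j = (if Nat.eqb j i then W i i else 0) + (if E j i then W i j else 0).
Proof.
  intros Hi Hj. destruct (Nat.eqb_spec j i) as [->|Hne].
  - destruct E_strong as [_ [Hloop _]]. rewrite Hloop. lra.
  - destruct (E j i) eqn:Ee; [lra|].
    destruct (W_compatible i j Hi Hj) as [_ [_ Hzero]]. rewrite Hzero; auto. lra.
Qed.

(* Every delayed slot [j + (d k j + 1) I] lies inside the state vector, so the
   active row carries all the weight of row [ik k] of [W]. *)
Lemma What_active_row_sum k : rsum ((D + 2) * I) (fun m => Wh k (ik k) m) = 1.
Proof.
  pose proof (ik_lt k) as Hik.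
  rewrite (rsum_ext _ _ _ (fun m _ => What_active_row k m)).
  rewrite rsum_plus, rsum_indicator, rsum_swap.
  destruct (Nat.ltb_spec (ik k) ((D + 2) * I)); [|lia].
  rewrite (rsum_ext I _ (fun j => if E j (ik k) then W (ik k) j else 0)).
  - destruct (W_stochastic (ik k) Hik) as [_ Hsum]. rewrite <- Hsum.
    rewrite (rsum_ext I (fun m => W (ik k) m) _ (fun j Hj => W_diag_plus_in_edges (ik k) j Hik Hj)), rsum_plus, rsum_indicator.
    destruct (Nat.ltb_spec (ik k) I); [reflexivity|lia].
  - intros j Hj. destruct (E j (ik k)) eqn:Ee; simpl.
    + rewrite rsum_indicator.
      destruct (Nat.ltb_spec (j + (d k j + 1) * I) ((D + 2) * I)); auto.
      destruct asynchrony as [_ [_ Hdelay]]. specialize (Hdelay k j Ee). nia.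
    + rewrite rsum_const. lra.
Qed.

Lemma What_idle_row_sum k r : (r < (D + 2) * I)%nat -> r <> ik k ->
  rsum ((D + 2) * I) (fun m => Wh k r m) = 1.
Proof.
  intros Hr Hne. pose proof (ik_lt k).
  rewrite (rsum_ext _ _ _ (fun m _ => What_idle_row k r m Hne)).
  destruct (andb (Nat.ltb r (2 * I)) (negb (Nat.eqb r (ik k + I)))) eqn:Hcopy.
  - rewrite rsum_indicator. destruct (Nat.ltb_spec r ((D + 2) * I)); [reflexivity|lia].
  - replace (orb (andb (Nat.leb (2 * I) r) (Nat.ltb r ((D + 2) * I))) (Nat.eqb r (ik k + I)))
      with true.
    + simpl andb. rewrite rsum_indicator.
      destruct (Nat.ltb_spec (r - I) ((D + 2) * I)); [reflexivity|lia].
    + destruct (Nat.eqb_spec r (ik k + I)); [now rewrite Bool.orb_true_r|].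
      destruct (Nat.ltb_spec r (2 * I)); [discriminate|].
      destruct (Nat.leb_spec (2 * I) r), (Nat.ltb_spec r ((D + 2) * I)); auto; lia.
Qed.

Lemma What_row_stochastic k : row_stochastic ((D + 2) * I) (Wh k).
Proof.
  intros r Hr. split; [intros; apply What_nonneg|].
  destruct (Nat.eq_dec r (ik k)) as [->|Hne].
  - apply What_active_row_sum.
  - apply What_idle_row_sum; auto.
Qed.

Lemma What_active_diag_ge k : mbar <= Wh k (ik k) (ik k).
Proof.
  pose proof (ik_lt k) as Hik. rewrite What_active_row, Nat.eqb_refl.
  assert (0 <= rsum I (fun j => if andb (E j (ik k)) (Nat.eqb (ik k) (j + (d k j + 1) * I))
                                then W (ik k) j else 0)).
  { apply rsum_nonneg. intros. destruct andb; [apply W_nonneg; auto|lra]. }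
  destruct (W_compatible (ik k) (ik k) Hik Hik) as [Hdiag _].
  specialize (Hdiag eq_refl). lra.
Qed.

Lemma What_active_delayed_ge k j : (j < I)%nat -> E j (ik k) = true ->
  mbar <= Wh k (ik k) (j + (d k j + 1) * I).
Proof.
  intros Hj Ee. pose proof (ik_lt k) as Hik. rewrite What_active_row.
  destruct (Nat.eqb_spec (j + (d k j + 1) * I) (ik k)); [nia|].
  set (f j0 := if andb (E j0 (ik k)) (Nat.eqb (j + (d k j + 1) * I) (j0 + (d k j0 + 1) * I))
               then W (ik k) j0 else 0).
  assert (f j <= rsum I f).
  { apply rsum_term_le; auto. intros. unfold f. destruct andb; [apply W_nonneg; auto|lra]. }
  unfold f at 1 in H. rewrite Ee, Nat.eqb_refl in H. simpl in H.
  destruct (W_compatible (ik k) j Hik Hj) as [_ [Hedge _]]. specialize (Hedge Ee). lra.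
Qed.

Lemma What_idle_agent k i : (i < I)%nat -> i <> ik k -> Wh k i i = 1.
Proof.
  intros. rewrite What_idle_row by auto.
  destruct (Nat.ltb_spec i (2 * I)); [|lia].
  destruct (Nat.eqb_spec i (ik k + I)); [lia|]. simpl. now rewrite Nat.eqb_refl.
Qed.

Lemma What_idle_copy k j : (j < I)%nat -> j <> ik k -> Wh k (j + I) (j + I) = 1.
Proof.
  intros. pose proof (ik_lt k). rewrite What_idle_row by lia.
  destruct (Nat.ltb_spec (j + I) (2 * I)); [|lia].
  destruct (Nat.eqb_spec (j + I) (ik k + I)); [lia|]. simpl. now rewrite Nat.eqb_refl.
Qed.

Lemma What_active_copy k : Wh k (ik k + I) (ik k) = 1.
Proof.
  pose proof (ik_lt k). rewrite What_idle_row by lia.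
  rewrite Nat.eqb_refl, Bool.andb_false_r, Bool.orb_true_r.
  replace (ik k + I - I)%nat with (ik k) by lia. now rewrite Nat.eqb_refl.
Qed.

Lemma What_delay_shift k r : (2 * I <= r)%nat -> (r < (D + 2) * I)%nat -> Wh k r (r - I) = 1.
Proof.
  intros. pose proof (ik_lt k). rewrite What_idle_row by lia.
  destruct (Nat.ltb_spec r (2 * I)); [lia|]. simpl andb at 1.
  destruct (Nat.leb_spec (2 * I) r); [|lia]. destruct (Nat.ltb_spec r ((D + 2) * I)); [|lia].
  now rewrite Nat.eqb_refl.
Qed.

Lemma WhatProd_nonneg t n r m : 0 <= WhatProd I D E W ik d t n r m.
Proof.
  revert r m. induction n as [|n IH]; intros; simpl; [apply What_nonneg|].
  apply rsum_nonneg. intros. apply Rmult_le_pos; auto. apply What_nonneg.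
Qed.

Lemma WhatProd_eq_mprod t n r m :
  WhatProd I D E W ik d t n r m = mprod ((D + 2) * I) Wh t n r m.
Proof.
  revert r m. induction n as [|n IH]; intros r m; simpl; [reflexivity|].
  apply rsum_ext. intros. now rewrite IH.
Qed.

(* [reached t m s r]: entry [(r, m)] of [Wh (t + s - 1) ... Wh t] is at least
   [mbar ^ s]; for [s = 0] the product is empty and [r = m]. *)
Definition reached (t m s r : nat) : Prop :=
  match s with
  | O => r = m
  | S s' => mbar ^ s <= WhatProd I D E W ik d t s' r m
  end.

Definition reached_from (t m s0 r : nat) : Prop :=
  forall s, (s0 <= s)%nat -> reached t m s r.

Lemma reached_step t m s l r : reached t m s l -> (l < (D + 2) * I)%nat ->
  mbar <= Wh (t + s) r l -> reached t m (S s) r.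
Proof.
  intros Hl HlN Hw. destruct s as [|s']; simpl in *.
  - subst l. rewrite Nat.add_0_r in Hw. lra.
  - eapply Rle_trans; [|apply (rsum_term_le _ (fun l0 => Wh (t + S s') r l0 *
                              WhatProd I D E W ik d t s' l0 m)); eauto].
    + assert (0 <= mbar * mbar ^ s') by (apply Rmult_le_pos; [lra|apply pow_le; lra]).
      apply Rmult_le_compat; lra.
    + intros. apply Rmult_le_pos; [apply What_nonneg|apply WhatProd_nonneg].
Qed.

Lemma reached_from_mono t m s0 s1 r : reached_from t m s0 r -> (s0 <= s1)%nat ->
  reached_from t m s1 r.
Proof. intros H Hle s Hs. apply H. lia. Qed.

Lemma agent_reached_persists t m i s0 : (i < I)%nat -> reached t m s0 i -> reached_from t m s0 i.
Proof.
  intros Hi Hr s Hs. induction Hs as [|s _ IH]; auto.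
  apply (reached_step _ _ _ i); [auto|nia|].
  destruct (Nat.eq_dec i (ik (t + s))) as [->|Hne].
  - apply What_active_diag_ge.
  - rewrite What_idle_agent by auto. lra.
Qed.

Lemma copy_reached t m j s0 : (j < I)%nat -> reached_from t m s0 j ->
  exists s1, (s1 <= s0 + T)%nat /\ reached_from t m s1 (j + I).
Proof.
  intros Hj Hreach. destruct asynchrony as [_ [Hactive _]].
  destruct (Hactive (t + s0)%nat j Hj) as [a [Ha1 [Ha2 Ha3]]].
  exists (S (a - t)). split; [lia|].
  intros s Hs. induction Hs as [|s Hs IH].
  - apply (reached_step _ _ _ j); [apply Hreach; lia|nia|].
    replace (t + (a - t))%nat with a by lia. rewrite <- Ha3, What_active_copy. lra.
  - destruct (Nat.eq_dec j (ik (t + s))) as [Hact|Hidle].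
    + apply (reached_step _ _ _ j); [apply Hreach; lia|nia|].
      rewrite Hact, What_active_copy. lra.
    + apply (reached_step _ _ _ (j + I)); [auto|nia|].
      rewrite What_idle_copy by auto. lra.
Qed.

Lemma delayed_copy_reached t m j s1 : (j < I)%nat -> reached_from t m s1 (j + I) ->
  forall e, (e <= D)%nat -> reached_from t m (s1 + e) (j + (e + 1) * I).
Proof.
  intros Hj Hreach e. induction e as [|e IH]; intros He.
  - rewrite Nat.add_0_r. replace (j + (0 + 1) * I)%nat with (j + I)%nat by lia. exact Hreach.
  - intros [|s] Hs; [lia|].
    apply (reached_step _ _ _ (j + (e + 1) * I)); [apply IH; lia|nia|].
    replace (j + (e + 1) * I)%nat with (j + (S e + 1) * I - I)%nat by nia.
    rewrite What_delay_shift by nia. lra.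
Qed.

Lemma neighbor_reached t m j i s0 : (j < I)%nat -> (i < I)%nat -> E j i = true ->
  reached_from t m s0 j -> reached_from t m (s0 + (2 * T + D)) i.
Proof.
  intros Hj Hi Eji Hreach.
  destruct (copy_reached t m j s0 Hj Hreach) as [s1 [Hs1 Hcopy]].
  pose proof (delayed_copy_reached t m j s1 Hj Hcopy) as Hbuf.
  destruct asynchrony as [_ [Hactive Hdelay]].
  destruct (Hactive (t + s1 + D)%nat i Hi) as [a [Ha1 [Ha2 Ha3]]].
  assert (Hda : (d a j <= D)%nat) by (apply Hdelay; rewrite Ha3; auto).
  apply (reached_from_mono _ _ (S (a - t))); [|lia].
  apply agent_reached_persists; auto.
  apply (reached_step _ _ _ (j + (d a j + 1) * I)); [apply Hbuf; auto; lia|nia|].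
  replace (t + (a - t))%nat with a by lia. rewrite <- Ha3.
  apply What_active_delayed_ge; auto. now rewrite Ha3.
Qed.

Lemma clos_trans_exit (Rel : relation nat) (P : nat -> Prop) a b :
  clos_trans nat Rel a b -> P a -> ~ P b -> exists x y, Rel x y /\ P x /\ ~ P y.
Proof.
  induction 1 as [x y Hxy|x y z _ IH1 _ IH2]; intros Ha Hb; [now exists x, y|].
  destruct (classic (P y)); [apply IH2|apply IH1]; auto.
Qed.

Lemma reached_agents_grow t m : (m < I)%nat -> forall c, (c < I)%nat ->
  exists L, NoDup L /\ length L = S c /\ In m L /\
    (forall x, In x L -> (x < I)%nat /\ reached_from t m (c * (2 * T + D)) x).
Proof.
  intros Hm c. induction c as [|c IH]; intros Hc.
  - exists (m :: nil). split; [|split; [reflexivity|split; [now left|]]].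
    + constructor; [intros []|constructor].
    + intros x [<-|[]]. split; [auto|apply agent_reached_persists; auto; reflexivity].
  - destruct IH as [L [HLnodup [HLlen [HmL HL]]]]; [lia|].
    destruct (classic (exists i, (i < I)%nat /\ ~ In i L)) as [[i [Hi HiL]]|Hfull].
    + assert (Hmi : m <> i) by (intros ->; contradiction).
      destruct E_strong as [_ [_ Hpath]].
      destruct (clos_trans_exit _ (fun x => In x L) m i (Hpath m i Hm Hi Hmi) HmL HiL)
        as [x [y [[Hx [Hy Exy]] [HxL HyL]]]].
      exists (y :: L). split; [constructor; auto|split; [simpl; congruence|split; [now right|]]].
      intros z [<-|Hz].
      * split; [auto|]. rewrite Nat.mul_succ_l.
        apply (neighbor_reached t m x); auto. apply HL; auto.
      * split; [apply HL; auto|].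
        apply (reached_from_mono _ _ (c * (2 * T + D))); [apply HL; auto|nia].
    + exfalso.
      assert (Hincl : incl (seq 0 I) L).
      { intros x Hx. apply in_seq in Hx. apply NNPP. intros HxL.
        apply Hfull. exists x. split; [lia|auto]. }
      pose proof (NoDup_incl_length (seq_NoDup I 0) Hincl). rewrite length_seq in *. lia.
Qed.

Lemma all_agents_reached t m i : (m < I)%nat -> (i < I)%nat ->
  reached_from t m ((I - 1) * (2 * T + D)) i.
Proof.
  intros Hm Hi.
  destruct (reached_agents_grow t m Hm (I - 1) ltac:(lia)) as [L [HLnodup [HLlen [_ HL]]]].
  assert (Hincl : incl (seq 0 I) L).
  { apply NoDup_length_incl; [exact HLnodup|rewrite length_seq; lia|].
    intros x Hx. apply in_seq. destruct (HL x Hx); lia. }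
  apply HL, Hincl, in_seq. lia.
Qed.

Lemma WhatProd_first_cols_ge t r m : (r < (D + 2) * I)%nat -> (m < I)%nat ->
  mbar ^ ((2 * I - 1) * T + I * D) <=
    WhatProd I D E W ik d t ((2 * I - 1) * T + I * D - 1) r m.
Proof.
  intros Hr Hm. set (K1 := ((2 * I - 1) * T + I * D)%nat).
  pose proof (async_period_pos I E T D ik d I_pos asynchrony) as HT.
  assert (HK1 : K1 = S (K1 - 1)) by (unfold K1; nia).
  assert (Hsplit : ((I - 1) * (2 * T + D) + T + D = K1)%nat).
  { unfold K1. destruct I as [|I']; [lia|].
    replace (S I' - 1)%nat with I' by lia. replace (2 * S I' - 1)%nat with (2 * I' + 1)%nat by lia.
    ring. }
  enough (Hreach : reached t m K1 r) by (rewrite HK1 in Hreach |- * at 1; exact Hreach).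
  pose proof (Nat.div_mod_eq r I) as Hr_eq. pose proof (Nat.mod_upper_bound r I ltac:(lia)) as Hmod.
  assert (Hdiv : (r / I < D + 2)%nat) by (apply Nat.Div0.div_lt_upper_bound; lia).
  destruct (r / I)%nat as [|e] eqn:He.
  - rewrite Nat.mul_0_r, Nat.add_0_l in Hr_eq. rewrite Hr_eq.
    apply all_agents_reached; auto. lia.
  - destruct (copy_reached t m (r mod I) _ Hmod (all_agents_reached t m _ Hm Hmod))
      as [s1 [Hs1 Hcopy]].
    assert (Hr_buf : r = (r mod I + (e + 1) * I)%nat) by (rewrite Hr_eq at 1; ring).
    rewrite Hr_buf.
    apply (delayed_copy_reached t m (r mod I) s1 Hmod Hcopy e); lia.
Qed.

End AugmentedMatrix.

Theorem lemma5 (I : nat) (E : nat -> nat -> bool) (W : nat -> nat -> R)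
    (mbar : R) (T D : nat) (ik : nat -> nat) (d : nat -> nat -> nat) :
  (1 <= I)%nat ->
  strongly_connected_digraph I E ->
  row_stochastic I W ->
  0 < mbar < 1 ->
  compatible I E W mbar ->
  async_model I E T D ik d ->
  let N := ((D + 2) * I)%nat in
  let K1 := ((2 * I - 1) * T + I * D)%nat in
  let eta := mbar ^ K1 in
  let rho := Rpower (1 - mbar ^ K1) (1 / INR K1) in
  (* (a) *)
  (forall k, row_stochastic N (What I D E W ik d k)) /\
  (* (b) : first I columns of \hat W^{k+K1-1:k} *)
  (forall k r m, (r < N)%nat -> (m < I)%nat ->
     eta <= WhatProd I D E W ik d k (K1 - 1) r m) /\
  (* (c) *)
  (exists C2 : R, 0 < C2 /\
   exists psi : nat -> nat -> R,
     (forall k, stochastic_vec N (psi k)) /\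
     (forall k t, (t <= k)%nat ->
        spec_norm_le N (fun r m => WhatProd I D E W ik d t (k - t) r m - psi t m)
                     (C2 * rho ^ (k - t))) /\
     (forall k i, (i < I)%nat -> eta <= psi k i)).
Proof.
  intros HI Hsc HW Hm Hc Has N K1 eta rho.
  pose proof (What_row_stochastic I E W mbar T D ik d HI Hsc HW Hc Has) as Hstoch.
  pose proof (WhatProd_first_cols_ge I E W mbar T D ik d HI Hsc HW Hm Hc Has) as Hcols.
  pose proof (async_period_pos I E T D ik d HI Has) as HT.
  assert (HK1 : (1 <= K1)%nat) by (unfold K1; nia).
  assert (HN : (1 <= N)%nat) by (unfold N; nia).
  assert (Heta : 0 < eta < 1).
  { split; [apply pow_lt; lra|apply pow_lt_1_compat; [lra|lia]]. }
  destruct (mprod_converges_geometrically N (What I D E W ik d) K1 eta Hstoch HN HK1 Heta)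
    as [psi [Hpsi [Hrate Hlow]]].
  { intros t r Hr. unfold N. rewrite <- WhatProd_eq_mprod. apply Hcols; auto; lia. }
  split; [exact Hstoch|split; [exact Hcols|]].
  exists (INR N * INR N / (1 - eta)). split.
  { assert (1 <= INR N) by (apply (le_INR 1); auto). apply Rdiv_lt_0_compat; [nra|lra]. }
  exists psi. split; [exact Hpsi|split].
  - intros k t _. apply (spec_norm_le_ext _ _ _ _ (fun r m _ _ =>
      f_equal (fun x => x - psi t m) (eq_sym (WhatProd_eq_mprod I E W D ik d t (k - t) r m)))).
    apply Hrate.
  - intros k i Hi. apply (Hlow k (K1 - 1)%nat i). intros r Hr.
    unfold N. rewrite <- WhatProd_eq_mprod. apply Hcols; auto.
Qed.
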